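(* Let $w$ be a word of length $k$ with $s \ne k-1$. Then either $b_{t(k-s)} = 0$ for every integer $1 \le t \le \lfloor k/(k-s) \rfloor$, or $b_{t(k-s)-1} = 0$ for every integer $1 \le t \le \lfloor (k+1)/(k-s) \rfloor$.
   Context: A word of length $k$ is written $w = w_k\dots w_1$. Autocorrelation digits: for $1 \le i \le k$, $b_i = 1$ if $w_j = w_{k-i+j}$ for all $j=1,\dots,i$, else $b_i = 0$ (so $b_k = 1$); convention $b_0=1$. $s = \max\{j \in\{1,\dots,k-1\}: b_j=1\}$, or $s=0$ if no such $j$. *)

From mathcomp Require Import all_boot.
Set Implicit Arguments. Unset Strict Implicit. Unset Printing Implicit Defensive.

(* A word of length k over an alphabet T is w = w_k ... w_1, modelled as a
   function w : nat -> T of which only the values w 1, ..., w k matter. *)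

Definition acdigit (T : eqType) (w : nat -> T) (k i : nat) : bool :=
  if i == 0 then true
  else [forall j : 'I_i, w j.+1 == w (k - i + j.+1)].

Definition sborder (T : eqType) (w : nat -> T) (k : nat) : nat :=
  \max_(1 <= j < k | acdigit w k j) j.

From mathcomp Require Import all_boot.
From mathcomp Require Import zify.
Set Implicit Arguments. Unset Strict Implicit.

(* A digit b_i = 1 (i <= k) says exactly that k - i is a period of w, so
   p := k - s is the least period, and s <> k - 1 means p >= 2.  By the Fine-Wilf
   type argument (if p < q are periods with p + q <= k then so is q - p), every
   period q with p + q <= k is a multiple of p.  If p does not divide k, a digit
   b_{tp} = 1 with tp < k would give such a period k - tp, forcing p | k.  If
   p | k, a digit b_{tp-1} = 1 gives the period k + 1 - tp: for t >= 2 it would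
   force p | k + 1, and for t = 1, combined with the period k - p, it makes all
   the letters equal, so 1 would be a period. *)

Section Periods.
Variables (T : eqType) (w : nat -> T) (k : nat).

Definition period q := forall j, 0 < j -> j + q <= k -> w j = w (j + q).

Lemma acdigitP i : i <= k -> reflect (period (k - i)) (acdigit w k i).
Proof.
rewrite /acdigit; case: i => [|i] hi /=.
  by apply: ReflectT => j j0; rewrite subn0; lia.
apply: (iffP forallP) => [H j j0 jle | H j].
  have jlt : j.-1 < i.+1 by lia.
  by have := H (Ordinal jlt); rewrite /= prednK // addnC => /eqP.
by apply/eqP; rewrite addnC; apply: H => //; have := ltn_ord j; lia.
Qed.

Lemma period_sub p q : period p -> period q -> p < q -> p + q <= k ->
  period (q - p).
Proof.
move=> Pp Pq lt_pq hpq j j0 jle; case: (leqP (j + q) k) => hjq.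
  rewrite Pq // (_ : j + q = j + (q - p) + p); last by lia.
  by symmetry; apply: Pp; lia.
transitivity (w (j - p)).
  by rewrite {1}(_ : j = j - p + p); [symmetry; apply: Pp | ]; lia.
by rewrite (_ : j + (q - p) = j - p + q); [apply: Pq | ]; lia.
Qed.

Lemma period_mul p a : period p -> period (a * p).
Proof.
move=> Pp; elim: a => [|a IH] j j0 hj; first by rewrite addn0.
rewrite mulSnr addnA -Pp; first apply: IH.
all: lia.
Qed.

Lemma prefix_const p : (forall i, 0 < i < p -> w i = w i.+1) ->
  forall i, 0 < i <= p -> w i = w 1.
Proof.
move=> step; elim=> [|i IH] // /andP[_ hi]; case: (posnP i) => [-> // | i0].
rewrite -step; last by rewrite i0.
by rewrite IH // i0 ltnW.
Qed.

Lemma period_const p : 0 < p -> period p -> (forall i, 0 < i < p -> w i = w i.+1) ->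
  forall j, 0 < j <= k -> w j = w 1.
Proof.
move=> p0 Pp step j hj.
have hr : j.-1 %% p < p by rewrite ltn_mod.
have ej : j = (j.-1 %% p).+1 + j.-1 %/ p * p by have := divn_eq j.-1 p; lia.
rewrite ej -(period_mul (a := j.-1 %/ p) Pp); first apply: (prefix_const step).
all: lia.
Qed.

Lemma period1_of_dvdn p : 0 < p <= k -> period p -> p %| k -> period (k.+1 - p) ->
  period 1.
Proof.
move=> /andP[p0 pk'] Pp pk Pq.
have kp : (k %/ p).-1 * p = k - p by rewrite -subn1 mulnBl mul1n divnK.
have step i : 0 < i < p -> w i = w i.+1.
  move=> hi; rewrite Pq; try lia.
  rewrite (_ : i + (k.+1 - p) = i.+1 + (k %/ p).-1 * p); last by lia.
  by symmetry; apply: (period_mul (a := (k %/ p).-1) Pp); lia.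
move=> j j0 jle; have Hc := period_const p0 Pp step.
by rewrite (Hc j) ?(Hc (j + 1)) //; lia.
Qed.

Lemma sborder_lt : 0 < k -> sborder w k < k.
Proof.
move=> k0; rewrite /sborder big_nat_cond.
elim/big_ind: _ => [// | x y | i /andP[/andP[_ ->]]] //.
by rewrite gtn_max => -> ->.
Qed.

Lemma acdigit_sborder : acdigit w k (sborder w k).
Proof.
rewrite /sborder big_nat_cond.
elim/big_ind: _ => [// | x y | i /andP[_ ->]] //.
by rewrite /maxn; case: ifP.
Qed.

Lemma leq_sborder j : 0 < j < k -> acdigit w k j -> j <= sborder w k.
Proof. by move=> hj hd; apply: leq_bigmax_seq; rewrite ?mem_index_iota. Qed.

Lemma period_sborder : 0 < k -> period (k - sborder w k).
Proof. by move=> k0; apply/acdigitP; [exact/ltnW/sborder_lt | exact: acdigit_sborder]. Qed.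

Lemma sborder_period_min q : 0 < q < k -> period q -> k - sborder w k <= q.
Proof.
move=> hq Pq; suff : k - q <= sborder w k by lia.
apply: leq_sborder; first by lia.
by apply/acdigitP; rewrite ?subKn ?leq_subr // ltnW //; case/andP: hq.
Qed.

Section LeastPeriod.
Variable p : nat.
Hypotheses (p_gt0 : 0 < p) (Pp : period p)
  (p_min : forall q, 0 < q < k -> period q -> p <= q).

Lemma period_dvdn q : 0 < q -> period q -> p + q <= k -> p %| q.
Proof.
elim/ltn_ind: q => q IH q0 Pq hq.
have : p <= q by apply: p_min => //; lia.
rewrite leq_eqVlt => /orP[/eqP <- | lt_pq]; first exact: dvdnn.
rewrite -(dvdn_subl (ltnW lt_pq) (dvdnn p)).
by apply: IH (period_sub Pp Pq lt_pq hq) _; lia.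
Qed.

Lemma dvdn_period_compl i : i < k -> p <= i -> period (k - i) ->
  (p %| k) = (p %| i).
Proof.
move=> ik pi Pki; rewrite -(subnK (ltnW ik)) dvdn_addr //.
by apply: period_dvdn => //; lia.
Qed.

Lemma acdigit_mul_false t : ~~ (p %| k) -> 0 < t -> t * p <= k ->
  acdigit w k (t * p) = false.
Proof.
move=> pNk t0 tpk; apply/(introF (acdigitP tpk)) => Pq.
have tpk' : t * p < k.
  by rewrite ltn_neqAle tpk andbT; apply: contraNneq pNk => <-; apply: dvdn_mull.
by rewrite (dvdn_period_compl tpk' (leq_pmull _ t0)) // dvdn_mull in pNk.
Qed.

Lemma acdigit_mul_pred_false t : 1 < p -> p %| k -> 0 < t -> t * p <= k.+1 ->
  acdigit w k (t * p - 1) = false.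
Proof.
move=> p_gt1 pk t0 tpk1.
have pNk1 : ~~ (p %| k.+1) by rewrite -addn1 dvdn_addr // dvdn1 gtn_eqF.
have tpk : t * p <= k.
  by move: tpk1; rewrite leq_eqVlt => /orP[/eqP e | //]; move: pNk1; rewrite -e dvdn_mull.
apply/(introF (acdigitP (leq_trans (leq_subr 1 _) tpk))) => Pq.
case: (ltnP 1 t) => t1.
  have tp2 : 2 * p <= t * p by rewrite leq_mul2r t1 orbT.
  have tpk' : t * p - 1 < k by lia.
  have ptp : p <= t * p - 1 by lia.
  have := dvdn_period_compl tpk' ptp Pq.
  by rewrite pk dvdn_subr ?dvdn_mull ?dvdn1 ?gtn_eqF //; lia.
have t_1 : t = 1 by lia.
rewrite t_1 mul1n (_ : k - (p - 1) = k.+1 - p) in Pq tpk; last by lia.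
have pk' : 0 < p <= k by lia.
have k1 : 0 < 1 < k by lia.
have := p_min k1 (period1_of_dvdn pk' Pp pk Pq); lia.
Qed.

End LeastPeriod.
End Periods.

Theorem proposition4p2 (T : eqType) (w : nat -> T) (k : nat) (hk : 0 < k)
    (hs : sborder w k <> k - 1) :
  (forall t : nat, 1 <= t <= k %/ (k - sborder w k) ->
     acdigit w k (t * (k - sborder w k)) = false)
  \/
  (forall t : nat, 1 <= t <= k.+1 %/ (k - sborder w k) ->
     acdigit w k (t * (k - sborder w k) - 1) = false).
Proof.
have s_lt := sborder_lt w hk.
set p := k - sborder w k.
have p_gt1 : 1 < p by rewrite /p; lia.
have Pp : period w k p := period_sborder hk.
have p_min : forall q, 0 < q < k -> period w k q -> p <= q := @sborder_period_min _ w k.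
have p_gt0 : 0 < p := ltnW p_gt1.
case: (boolP (p %| k)) => pk; [right | left] => t /andP[t0];
  rewrite leq_divRL // => htp.
- exact: (acdigit_mul_pred_false p_gt0 Pp p_min p_gt1 pk t0 htp).
- exact: (acdigit_mul_false p_gt0 Pp p_min pk t0 htp).
Qed.
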